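(* Let $n\ge2$ and let $\mathcal S$ be a branch of $\mathcal Q=\{x:x^TMx-2\beta^Tx+\gamma\le0\}$ in the hyperbolic case (one branch of a two-sheet hyperboloid or of a translated cone). Assume $\delta_{\inf}:=\inf\{x_n:x\in\mathcal S\}>-\infty$, but the infimum is either not attained or attained at more than one point of $\mathcal S$. Then $$\inf\{x_n:x\in\mathcal S\cap\mathbb Z^n\}-\delta_{\inf}\le1 .$$
   Context: Hyperbolic case: $M\in\mathbb S^n$ invertible with exactly one negative eigenvalue, $\beta\in\mathbb R^n$, $\gamma\in\mathbb R$, $q^*:=\beta^TM^{-1}\beta-\gamma\le0$; with $c_0=M^{-1}\beta$, $u$ a unit eigenvector of the negative eigenvalue and $C=\{y:y^TMy\le0,\ u^Ty\ge0\}$, the branches of $\mathcal Q$ are $c_0+(\{y:y^TMy\le q^*\}\cap C)$ and $c_0+(\{y:y^TMy\le q^*\}\cap(-C))$. *)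

From HB Require Import structures.
From mathcomp Require Import all_boot all_order all_algebra.
From mathcomp Require Import all_classical all_reals.
From mathcomp Require Import ereal.
Set Implicit Arguments. Unset Strict Implicit. Unset Printing Implicit Defensive.
Import Order.TTheory GRing.Theory Num.Theory.
Local Open Scope ring_scope.
Local Open Scope classical_set_scope.

Section Defs.
Variable R : realType.

Definition qform n (M : 'M[R]_n) (y : 'cV[R]_n) : R := (y^T *m M *m y) 0 0.

Definition qstar n (M : 'M[R]_n) (beta : 'cV[R]_n) (gamma : R) : R :=
  (beta^T *m invmx M *m beta) 0 0 - gamma.

Definition center n (M : 'M[R]_n) (beta : 'cV[R]_n) : 'cV[R]_n := invmx M *m beta.

Definition coneC n (M : 'M[R]_n) (u : 'cV[R]_n) : set 'cV[R]_n :=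
  [set y | qform M y <= 0 /\ 0 <= (u^T *m y) 0 0].

Definition branch n (M : 'M[R]_n) (beta : 'cV[R]_n) (gamma : R)
    (u : 'cV[R]_n) (s : bool) : set 'cV[R]_n :=
  [set x | let y := x - center M beta in
           qform M y <= qstar M beta gamma /\
           (if s then coneC M u y else coneC M u (- y))].

Definition intpt n (x : 'cV[R]_n) : Prop := forall i, x i 0 \is a Num.int.

Definition xlast n (x : 'cV[R]_n.+1) : R := x ord_max 0.

Definition inf_last n (A : set 'cV[R]_n.+1) : \bar R :=
  ereal_inf [set (xlast x)%:E | x in A].

End Defs.

From HB Require Import structures.
From mathcomp Require Import all_boot all_order all_algebra.
From mathcomp Require Import all_classical all_reals.
From mathcomp Require Import ereal.
From mathcomp Require Import ring lra.
Import Order.TTheory GRing.Theory Num.Theory.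
Local Open Scope ring_scope.
Local Open Scope classical_set_scope.

Set Implicit Arguments. Unset Strict Implicit. Unset Printing Implicit Defensive.

(* Write [y = x - c0] and [Q y = y^T M y]. Since [M] has a single negative
   eigenvalue, simple, with eigenvector [u], [Q] is positive definite on the
   orthogonal of [u]; hence the cone [C] satisfies a reverse Cauchy-Schwarz
   inequality, is convex, and the branch [S] is stable under adding vectors
   of [C]. Let [g = M^-1 e_n], so that [y^T M g] is the last coordinate of
   [y]. A finite infimum forbids directions of [C] going down, which forces
   [Q g <= 0] and [- g] in [C]. If [Q g < 0], splitting [y] along [g] and its
   [Q]-orthogonal shows that the infimum is attained at a single point. If
   [Q g = 0], then [- g] is a horizontal direction of [C], and sliding along
   it produces integer points of [S] at height [floor inf + 1]. *)

Section Dot.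
Variables (R : realFieldType) (N : nat).
Implicit Types (x y z : 'cV[R]_N).

Definition dot x y : R := (x^T *m y) 0 0.

Lemma dotE x y : dot x y = \sum_i x i 0 * y i 0.
Proof. by rewrite /dot !mxE; apply: eq_bigr => i _; rewrite !mxE. Qed.

Lemma dotC x y : dot x y = dot y x.
Proof. by rewrite !dotE; apply: eq_bigr => i _; rewrite mulrC. Qed.

Lemma dotDr x y z : dot x (y + z) = dot x y + dot x z.
Proof. by rewrite !dotE -big_split; apply: eq_bigr => i _; rewrite !mxE mulrDr. Qed.

Lemma dotDl x y z : dot (y + z) x = dot y x + dot z x.
Proof. by rewrite dotC dotDr !(dotC x). Qed.

Lemma dotZr a x y : dot x (a *: y) = a * dot x y.
Proof. by rewrite !dotE mulr_sumr; apply: eq_bigr => i _; rewrite !mxE mulrCA. Qed.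

Lemma dotZl a x y : dot (a *: y) x = a * dot y x.
Proof. by rewrite dotC dotZr dotC. Qed.

Lemma dotNr x y : dot x (- y) = - dot x y.
Proof. by rewrite -scaleN1r dotZr mulN1r. Qed.

Lemma dotNl x y : dot (- y) x = - dot y x.
Proof. by rewrite dotC dotNr dotC. Qed.

Lemma dotBr x y z : dot x (y - z) = dot x y - dot x z.
Proof. by rewrite dotDr dotNr. Qed.

Lemma dotBl x y z : dot (y - z) x = dot y x - dot z x.
Proof. by rewrite dotDl dotNl. Qed.

Lemma dot0l x : dot 0 x = 0.
Proof. by rewrite dotE big1 // => i _; rewrite mxE mul0r. Qed.

Lemma dot_ge0 x : 0 <= dot x x.
Proof. by rewrite dotE sumr_ge0 // => i _; rewrite -expr2 sqr_ge0. Qed.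

Lemma dot_eq0 x : (dot x x == 0) = (x == 0).
Proof.
apply/idP/eqP => [|->]; last by rewrite dot0l.
rewrite dotE psumr_eq0 => [/allP x0|i _]; last by rewrite -expr2 sqr_ge0.
apply/matrixP => i j; rewrite (ord1 j) mxE.
by apply/eqP; rewrite -sqrf_eq0 expr2; exact: implyP (x0 i (mem_index_enum i)) isT.
Qed.

Lemma dot_gt0 x : x != 0 -> 0 < dot x x.
Proof. by move=> x0; rewrite lt_def dot_eq0 x0 dot_ge0. Qed.

Lemma dot_abs_le x y : 2 * `|dot x y| <= dot x x + dot y y.
Proof.
have := dot_ge0 (x - y); have := dot_ge0 (x + y).
rewrite !dotDl !dotDr !dotNl !dotNr (dotC y x).
by case: (lerP 0 (dot x y)) => h; [rewrite ger0_norm | rewrite ltr0_norm]; lra.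
Qed.

Lemma dot_col_delta x (i : 'I_N) : dot (delta_mx i 0) x = x i 0.
Proof.
rewrite dotE (bigD1 i) //= big1 => [|j ji]; first by rewrite !mxE !eqxx mul1r addr0.
by rewrite !mxE (negbTE ji) mul0r.
Qed.

Lemma quadratic_ge0_discr (a b c : R) : 0 <= c ->
  (forall t, 0 <= a + 2 * b * t + c * t ^+ 2) -> b ^+ 2 <= a * c.
Proof.
move=> c0 H; have a0 : 0 <= a by have := H 0; rewrite expr0n /= !mulr0 !addr0.
have [cp|] := ltrP 0 c.
  have ct : c * (- b / c) = - b by rewrite mulrCA divff ?mulr1 // gt_eqF.
  by have := H (- b / c); nra.
rewrite le_eqVlt ltNge c0 orbF => /eqP c_0; rewrite c_0 mulr0.
have [->|b0] := eqVneq b 0; first by rewrite expr0n.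
have := H (- (a + 1) / (2 * b)); rewrite c_0 mul0r addr0.
have -> : 2 * b * (- (a + 1) / (2 * b)) = - (a + 1) by field; rewrite b0.
lra.
Qed.

End Dot.

Section QuadraticForm.
Variables (R : realType) (N : nat).
Implicit Types (x y : 'cV[R]_N) (A : 'M[R]_N).

Lemma qformE A x : qform A x = dot x (A *m x).
Proof. by rewrite /qform /dot mulmxA. Qed.

Lemma dot_mulmx_tr A x y : dot x (A *m y) = dot (A^T *m x) y.
Proof. by rewrite /dot trmx_mul trmxK mulmxA. Qed.

Lemma qformZ A a x : qform A (a *: x) = a ^+ 2 * qform A x.
Proof. by rewrite !qformE -scalemxAr dotZl dotZr mulrA expr2. Qed.

Lemma qformN A x : qform A (- x) = qform A x.
Proof. by rewrite -scaleN1r qformZ sqrrN expr1n mul1r. Qed.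

Section Symmetric.
Variable A : 'M[R]_N.
Hypothesis symA : A^T = A.

Lemma dot_mulmx_sym x y : dot x (A *m y) = dot y (A *m x).
Proof. by rewrite dot_mulmx_tr symA dotC. Qed.

Lemma qformD x y : qform A (x + y) = qform A x + 2 * dot x (A *m y) + qform A y.
Proof.
rewrite !qformE mulmxDr !dotDl !dotDr (dot_mulmx_sym y x); ring.
Qed.

Lemma qform_cauchy_schwarz x y : 0 <= qform A y ->
  (forall t, 0 <= qform A (x + t *: y)) ->
  dot x (A *m y) ^+ 2 <= qform A x * qform A y.
Proof.
move=> y0 H; apply: quadratic_ge0_discr y0 _ => t.
have := H t; rewrite qformD qformZ -scalemxAr dotZr.
by congr (0 <= _); ring.
Qed.

End Symmetric.

Lemma mulmx_sqnorm_le A :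
  exists K, 0 <= K /\ forall x, dot (A *m x) (A *m x) <= K * dot x x.
Proof.
exists (\sum_i dot (row i A)^T (row i A)^T); split.
  by apply: sumr_ge0 => i _; apply: dot_ge0.
move=> x; rewrite [dot (A *m x) _]dotE mulr_suml; apply: ler_sum => i _.
have -> : (A *m x) i 0 = dot (row i A)^T x.
  by rewrite dotE mxE; apply: eq_bigr => j _; rewrite !mxE.
have CS := @qform_cauchy_schwarz 1%:M (trmx1 _ _) (row i A)^T x.
rewrite -expr2; move: CS; rewrite !qformE !mul1mx; apply.
  exact: dot_ge0.
by move=> t; rewrite qformE mul1mx dot_ge0.
Qed.

Lemma qform_abs_le A : exists K, 0 <= K /\ forall x, `|qform A x| <= K * dot x x.
Proof.
have [K [K0 HK]] := mulmx_sqnorm_le A.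
exists ((1 + K) / 2); split; first by rewrite divr_ge0 //; lra.
move=> x; rewrite qformE; have := dot_abs_le x (A *m x); have := HK x; lra.
Qed.

End QuadraticForm.

Lemma det_add_rank1 (K : comNzRingType) m (x y : 'cV[K]_m) :
  \det (1%:M + x *m y^T) = 1 + (y^T *m x) 0 0.
Proof.
pose L := block_mx (1%:M : 'M[K]_1) (- y^T) x (1%:M : 'M_m).
have E1 : L = block_mx 1%:M 0 x 1%:M *m block_mx 1%:M (- y^T) 0 (1%:M + x *m y^T).
  rewrite mulmx_block ?mul1mx ?mul0mx ?mulmx1 ?mulmx0 ?addr0 ?add0r.
  by rewrite mulmxN addrCA addNr addr0.
have E2 : L = block_mx (1%:M + y^T *m x) (- y^T) 0 1%:M *m block_mx 1%:M 0 x 1%:M.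
  rewrite mulmx_block ?mul1mx ?mul0mx ?mulmx1 ?mulmx0 ?addr0 ?add0r.
  by rewrite mulNmx addrK.
have := congr1 determinant E1; rewrite E2 !det_mulmx.
rewrite (det_lblock (1%:M : 'M[K]_1) x 1%:M) (det_ublock _ (- y^T)).
rewrite (det_ublock (1%:M : 'M[K]_1) (- y^T)).
by rewrite !det1 !mul1r !mulr1 det_mx11 !mxE eqxx /= => ->.
Qed.

(* If [P] is an idempotent on which [A] acts as [l], then [x - A] factors
   through [1 + (x - l - 1) P], whose determinant exposes [x - l]. *)
Lemma scalar_mxB_factor (K : comNzRingType) m (A P : 'M[K]_m) (x l : K) :
  P *m P = P -> A *m P = l *: P -> P *m A = l *: P ->
  x%:M - A = (1%:M + (x - l - 1) *: P) *m (P + (x%:M - A) *m (1%:M - P)).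
Proof.
move=> PP AP PA; set D := x%:M - A.
have DP : D *m P = (x - l) *: P by rewrite /D mulmxBl AP mul_scalar_mx scalerBl.
have PD : P *m D = (x - l) *: P by rewrite /D mulmxBr PA mul_mx_scalar scalerBl.
rewrite mulmxBr mulmx1 DP mulmxDl mul1mx -scalemxAl mulmxDr mulmxBr PP PD.
rewrite -scalemxAr PP subrr addr0.
by apply/matrixP => i j; rewrite !mxE; ring.
Qed.

Section BiorthogonalPair.
Variables (K : comNzRingType) (m : nat) (a1 b1 a2 b2 : 'cV[K]_m).
Hypotheses (b1a1 : b1^T *m a1 = 1%:M) (b2a2 : b2^T *m a2 = 1%:M).
Hypotheses (b1a2 : b1^T *m a2 = 0) (b2a1 : b2^T *m a1 = 0).

Lemma rank2_proj_idem :
  (a1 *m b1^T + a2 *m b2^T) *m (a1 *m b1^T + a2 *m b2^T) = a1 *m b1^T + a2 *m b2^T.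
Proof.
by rewrite mulmxDl !mulmxDr !mulmxA -!(mulmxA _ _ a1) -!(mulmxA _ _ a2)
  b1a1 b2a2 b1a2 b2a1 !mulmx0 !mul0mx !mulmx1 addr0 add0r.
Qed.

Lemma det_add_rank2_proj c :
  \det (1%:M + c *: (a1 *m b1^T + a2 *m b2^T)) = (1 + c) ^+ 2.
Proof.
have -> : 1%:M + c *: (a1 *m b1^T + a2 *m b2^T) =
    (1%:M + (c *: a1) *m b1^T) *m (1%:M + (c *: a2) *m b2^T).
  rewrite mulmxDl mul1mx mulmxDr mulmx1 -!scalemxAl -scalemxAr -mulmxA
    (mulmxA b1^T) b1a2 mul0mx mulmx0 !scaler0 addr0 scalerDr.
  by rewrite addrAC addrA.
rewrite det_mulmx !det_add_rank1 -!scalemxAr b1a1 b2a2 !mxE eqxx mulr1n.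
by rewrite mulr1 expr2.
Qed.

End BiorthogonalPair.

Lemma trmx_eigen (K : comNzRingType) n (A : 'M[K]_n) (a : 'cV[K]_n) (l : K) :
  A^T = A -> A *m a = l *: a -> a^T *m A = l *: a^T.
Proof. by move=> symA Aa; rewrite -{1}symA -trmx_mul Aa linearZ. Qed.

(* Two orthogonal eigenvectors [u], [z] for [lam] give a spectral projection
   of rank two, so [('X - lam)^2] divides the characteristic polynomial. *)
Lemma char_poly_mup_ge2 (R : realFieldType) n (M : 'M[R]_n) (lam : R) (u z : 'cV[R]_n) :
  M^T = M -> M *m u = lam *: u -> dot u u = 1 ->
  M *m z = lam *: z -> dot u z = 0 -> z != 0 ->
  (2 <= mup lam (char_poly M))%N.
Proof.
move=> symM Mu uu1 Mz uz z0.
have zz : dot z z != 0 by rewrite dot_eq0.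
pose z' := (dot z z)^-1 *: z.
have uu : u^T *m u = 1%:M by rewrite [_ *m _]mx11_scalar -/(dot u u) uu1.
have zz' : z^T *m z' = 1%:M by rewrite [_ *m _]mx11_scalar -/(dot z z') dotZr mulVf.
have uz' : u^T *m z' = 0.
  by rewrite [_ *m _]mx11_scalar -/(dot u z') dotZr uz mulr0 raddf0.
have zu : z^T *m u = 0 by rewrite [_ *m _]mx11_scalar -/(dot z u) dotC uz raddf0.
pose P := u *m u^T + z' *m z^T.
have Mz' : M *m z' = lam *: z' by rewrite -scalemxAr Mz scalerA mulrC -scalerA.
have MP : M *m P = lam *: P.
  by rewrite /P mulmxDr !mulmxA Mu Mz' -!scalemxAl scalerDr.
have PM : P *m M = lam *: P.
  rewrite /P mulmxDl -!mulmxA (trmx_eigen symM Mu) (trmx_eigen symM Mz).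
  by rewrite -!scalemxAr scalerDr.
pose Pp := map_mx polyC P.
have mapT (a b : 'cV[R]_n) :
    (map_mx polyC b)^T *m map_mx polyC a = map_mx polyC (b^T *m a).
  by rewrite map_trmx -map_mxM.
have Pp_eq : Pp = map_mx polyC u *m (map_mx polyC u)^T +
    map_mx polyC z' *m (map_mx polyC z)^T.
  by rewrite /Pp map_mxD !map_mxM !map_trmx.
have PPp : Pp *m Pp = Pp.
  rewrite Pp_eq rank2_proj_idem //; apply: etrans (mapT _ _) _;
    by rewrite ?uu ?zz' ?uz' ?zu ?map_mx1 ?map_mx0.
have MPp : map_mx polyC M *m Pp = lam%:P *: Pp by rewrite -map_mxM MP map_mxZ.
have PMp : Pp *m map_mx polyC M = lam%:P *: Pp by rewrite -map_mxM PM map_mxZ.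
have detP : \det (1%:M + ('X - lam%:P - 1) *: Pp) = (1 + ('X - lam%:P - 1)) ^+ 2.
  rewrite Pp_eq det_add_rank2_proj //; apply: etrans (mapT _ _) _;
    by rewrite ?uu ?zz' ?uz' ?zu ?map_mx1 ?map_mx0.
rewrite mup_geq; last exact: monic_neq0 (char_poly_monic M).
rewrite /char_poly /char_poly_mx (scalar_mxB_factor 'X PPp MPp PMp) det_mulmx detP.
rewrite (addrC 1) subrK.
exact: dvdp_mulr (dvdpp _).
Qed.

Lemma mulmx_rank1 (R : realFieldType) n (x y v : 'cV[R]_n) :
  x *m y^T *m v = dot y v *: x.
Proof. by rewrite -mulmxA [y^T *m v]mx11_scalar mul_mx_scalar. Qed.

Lemma psd_mulmx_sqnorm_le (R : realType) N (A : 'M[R]_N) (u : 'cV[R]_N) :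
  A^T = A -> (forall v, dot u v = 0 -> 0 <= qform A v) ->
  (forall v, dot u v = 0 -> dot u (A *m v) = 0) ->
  exists K, 0 <= K /\
    forall v, dot u v = 0 -> dot (A *m v) (A *m v) <= K * qform A v.
Proof.
move=> symA psdA stabA; have [K [K0 HK]] := qform_abs_le A.
exists K; split => // v uv.
have CS : dot (A *m v) (A *m v) ^+ 2 <= qform A (A *m v) * qform A v.
  apply: qform_cauchy_schwarz => [||t]; rewrite ?psdA //.
  by rewrite dotDr dotZr stabA // uv mulr0 addr0.
have := HK (A *m v); rewrite ler_norml => /andP[_ hK].
have Qv := psdA v uv; have a0 := dot_ge0 (A *m v).
have [a_eq0|a_gt0] := eqVneq (dot (A *m v) (A *m v)) 0.
  by rewrite a_eq0 mulr_ge0.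
have {}a_gt0 : 0 < dot (A *m v) (A *m v) by rewrite lt_def a_gt0.
nra.
Qed.

Section Rayleigh.
Variables (R : realType) (N : nat) (M : 'M[R]_N) (lam : R) (u : 'cV[R]_N).
Hypotheses (symM : M^T = M) (Mu : M *m u = lam *: u) (unit_u : dot u u = 1).

Lemma dot_eigen_mulmx v : dot u (M *m v) = lam * dot u v.
Proof. by rewrite dot_mulmx_tr symM Mu dotZl. Qed.

Definition rayleigh_inf : R :=
  inf [set qform M v / dot v v | v in [set v | dot u v = 0 /\ v != 0]].

Lemma rayleigh_inf_le v : dot u v = 0 -> rayleigh_inf * dot v v <= qform M v.
Proof.
move=> uv; have [->|v0] := eqVneq v 0; first by rewrite dot0l mulr0 qformE dot0l.
have [K [K0 HK]] := qform_abs_le M.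
rewrite -ler_pdivlMr ?dot_gt0 //; apply: ge_inf; last by exists v.
exists (- K) => _ [w [_ w0] <-]; rewrite ler_pdivlMr ?dot_gt0 // mulNr.
by have := HK w; rewrite ler_norml => /andP[].
Qed.

(* The infimum of the Rayleigh quotient on [u]'s orthogonal is an eigenvalue:
   otherwise [M - rayleigh_inf] would be coercive there, and the infimum could
   be raised. *)
Lemma rayleigh_inf_eigen : (exists2 w, dot u w = 0 & w != 0) ->
  exists z, [/\ dot u z = 0, z != 0 & M *m z = rayleigh_inf *: z].
Proof.
move=> [w uw w0]; set m := rayleigh_inf.
pose A := M - m%:M.
have Av v : A *m v = M *m v - m *: v by rewrite mulmxBl mul_scalar_mx.
have symA : A^T = A by rewrite linearB /= symM tr_scalar_mx.
have qA v : qform A v = qform M v - m * dot v v by rewrite !qformE Av dotBr dotZr.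
have psdA v : dot u v = 0 -> 0 <= qform A v.
  by move=> uv; rewrite qA subr_ge0 rayleigh_inf_le.
have uAv v : dot u (A *m v) = (lam - m) * dot u v.
  by rewrite Av dotBr dot_eigen_mulmx dotZr mulrBl.
pose A' := A + (1 - lam + m) *: (u *m u^T).
have A'v v : A' *m v = A *m v + ((1 - lam + m) * dot u v) *: u.
  by rewrite mulmxDl -scalemxAl mulmx_rank1 scalerA.
have uA'v v : dot u (A' *m v) = dot u v.
  by rewrite A'v dotDr uAv dotZr unit_u; ring.
have [A'unit|A'sing] := boolP (A' \in unitmx).
  have stabA v : dot u v = 0 -> dot u (A *m v) = 0 by move=> uv; rewrite uAv uv mulr0.
  have [K1 [K10 HK1]] := psd_mulmx_sqnorm_le symA psdA stabA.
  have [K2 [K20 HK2]] := mulmx_sqnorm_le (invmx A').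
  have coerA v : dot u v = 0 -> dot v v <= K2 * K1 * qform A v.
    move=> uv; have := HK2 (A' *m v); rewrite mulKmx // A'v uv mulr0 scale0r addr0.
    by have := HK1 v uv; nra.
  have L1 : 0 < K2 * K1 + 1 by rewrite ltr_pwDr ?mulr_ge0.
  have : m + (K2 * K1 + 1)^-1 <= m.
    apply: lb_le_inf; first by exists (qform M w / dot w w); exists w.
    move=> _ [v [uv v0] <-]; rewrite ler_pdivlMr ?dot_gt0 //.
    have vv := dot_gt0 v0; have := coerA v uv; have := psdA v uv; rewrite qA.
    have : (K2 * K1 + 1)^-1 * (K2 * K1 + 1) = 1 by rewrite mulVf ?gt_eqF.
    have : 0 < (K2 * K1 + 1)^-1 by rewrite invr_gt0.
    nra.
  by rewrite gerDl leNgt invr_gt0 L1.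
have /det0P [v v0 vA'] : \det A' == 0 by move: A'sing; rewrite unitmxE unitfE negbK.
have symA' : A'^T = A' by rewrite linearD /= symA linearZ /= trmx_mul trmxK.
have A'z : A' *m v^T = 0 by rewrite -symA' -trmx_mul vA' trmx0.
have uz : dot u v^T = 0 by rewrite -uA'v A'z dotC dot0l.
exists v^T; split => //; first by rewrite trmx_eq0.
by apply/eqP; rewrite -subr_eq0 -Av -A'z A'v uz mulr0 scale0r addr0.
Qed.

End Rayleigh.

Section Lorentz.
Variables (R : realType) (N : nat) (M : 'M[R]_N) (lam : R) (u : 'cV[R]_N).
Hypotheses (symM : M^T = M) (unitM : M \in unitmx) (lam_lt0 : lam < 0).
Hypotheses (mup_lam : mup lam (char_poly M) = 1%N)
  (neg_eigen : forall mu, mu < 0 -> eigenvalue M mu -> mu = lam).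
Hypotheses (Mu : M *m u = lam *: u) (unit_u : dot u u = 1).

Lemma qform_gt0_orth w : dot u w = 0 -> w != 0 -> 0 < qform M w.
Proof.
move=> uw w0.
have [z [uz z0 Mz]] := rayleigh_inf_eigen symM Mu unit_u (ex_intro2 _ _ w uw w0).
have m_gt0 : 0 < rayleigh_inf M u.
  have [m_lt0|//|m0] := ltrgtP (rayleigh_inf M u) 0.
    have em : eigenvalue M (rayleigh_inf M u).
      by apply/eigenvalueP; exists z^T; [exact: trmx_eigen | rewrite trmx_eq0].
    rewrite (neg_eigen m_lt0 em) in Mz.
    by have := char_poly_mup_ge2 symM Mu unit_u Mz uz z0; rewrite mup_lam.
  by move: z0; rewrite -(mulKmx unitM z) Mz m0 scale0r mulmx0 eqxx.
by have := rayleigh_inf_le M uw; have := dot_gt0 w0; nra.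
Qed.

Lemma qform_ge0_orth w : dot u w = 0 -> 0 <= qform M w.
Proof.
move=> uw; have [->|w0] := eqVneq w 0; first by rewrite qformE dot0l.
exact/ltW/qform_gt0_orth.
Qed.

Lemma orth_cauchy_schwarz w v : dot u w = 0 -> dot u v = 0 ->
  dot w (M *m v) ^+ 2 <= qform M w * qform M v.
Proof.
move=> uw uv; apply: qform_cauchy_schwarz => [//||t]; apply: qform_ge0_orth => //.
by rewrite dotDr dotZr uw uv mulr0 addr0.
Qed.

Lemma dot_orth_proj y : dot u (y - dot u y *: u) = 0.
Proof. by rewrite dotBr dotZr unit_u mulr1 subrr. Qed.

Lemma bform_orth_split y z : dot y (M *m z) =
  lam * dot u y * dot u z + dot (y - dot u y *: u) (M *m (z - dot u z *: u)).
Proof.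
rewrite mulmxBr -scalemxAr Mu !dotBl !dotBr !dotZl !dotZr.
rewrite (dot_eigen_mulmx symM Mu) (dotC y u) unit_u; ring.
Qed.

Lemma coneC_bform_le0 y z : coneC M u y -> coneC M u z -> dot y (M *m z) <= 0.
Proof.
move=> [Qy uy] [Qz uz]; rewrite -/(dot u y) in uy; rewrite -/(dot u z) in uz.
have cs := orth_cauchy_schwarz (dot_orth_proj y) (dot_orth_proj z).
have Qw0 := qform_ge0_orth (dot_orth_proj y).
have Qv0 := qform_ge0_orth (dot_orth_proj z).
rewrite qformE bform_orth_split -qformE in Qy.
rewrite qformE bform_orth_split -qformE in Qz.
rewrite bform_orth_split; move: cs Qw0 Qv0 Qy Qz.
set a := dot u y; set b := dot u z.
set Qw := qform M _; set Qv := qform M _; set B := dot _ _.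
move=> cs Qw0 Qv0 Qy Qz.
have : Qw * Qv <= (- lam * a ^+ 2) * (- lam * b ^+ 2).
  by apply: ler_pM; [exact: Qw0 | exact: Qv0 | nra | nra].
have ab0 : 0 <= - lam * a * b.
  by do 2?apply: mulr_ge0 => //; rewrite oppr_ge0 ltW.
have : B ^+ 2 <= (- lam * a * b) ^+ 2 by nra.
move=> hB; have := ler_norm B; suff : `|B| <= - lam * a * b by lra.
by rewrite -ler_sqr ?nnegrE // real_normK ?num_real.
Qed.

Lemma qformD_coneC_le y z : coneC M u y -> coneC M u z ->
  qform M (y + z) <= qform M y.
Proof.
move=> Cy Cz; have := coneC_bform_le0 Cy Cz; case: Cz => Qz _.
by rewrite qformD //; lra.
Qed.

Lemma coneC_add y z : coneC M u y -> coneC M u z -> coneC M u (y + z).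
Proof.
move=> Cy Cz; have := qformD_coneC_le Cy Cz; case: Cy Cz => Qy uy [_ uz].
by split; [lra | rewrite -/(dot u _) dotDr; apply: addr_ge0].
Qed.

Lemma coneC_eigen : coneC M u u.
Proof.
split; last by rewrite -/(dot u u) unit_u.
by rewrite qformE Mu dotZr unit_u mulr1 ltW.
Qed.

Lemma coneC_scale t z : 0 <= t -> coneC M u z -> coneC M u (t *: z).
Proof.
move=> t0 [Qz uz]; split; last by rewrite -/(dot u _) dotZr mulr_ge0.
by rewrite qformZ mulr_ge0_le0 ?sqr_ge0.
Qed.

(* The orthogonal of a timelike vector [g] is spacelike: otherwise the plane
   spanned by [g] and [r] would meet [u]'s orthogonal in a non-positive
   vector. *)
Lemma qform_gt0_orth_timelike g r : qform M g < 0 -> dot g (M *m r) = 0 ->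
  r != 0 -> 0 < qform M r.
Proof.
move=> Qg gr r0; rewrite ltNge; apply/negP => Qr.
have ug : dot u g != 0.
  by apply: contraTneq Qg => ug; rewrite -leNgt qform_ge0_orth.
pose w := dot u g *: r - dot u r *: g.
have uw : dot u w = 0 by rewrite dotBr !dotZr mulrC subrr.
have rg : dot r (M *m g) = 0 by rewrite (dot_mulmx_sym symM) gr.
have w0 : w = 0.
  apply/eqP; apply: contraTT Qr => w0; rewrite -ltNge.
  suff : 0 < dot u g ^+ 2 * qform M r.
    by rewrite pmulr_rgt0 // exprn_even_gt0.
  have := qform_gt0_orth uw w0.
  rewrite qformD // qformN !qformZ mulmxN -scalemxAr dotNr dotZr dotZl rg.
  by have := sqr_ge0 (dot u r); nra.
have : dot u r * qform M g = 0.
  have : dot g (M *m w) = 0 by rewrite w0 mulmx0 dotC dot0l.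
  rewrite /w mulmxBr -!scalemxAr dotBr !dotZr gr mulr0 -qformE sub0r.
  by move=> /eqP; rewrite oppr_eq0 => /eqP.
move/eqP; rewrite mulf_eq0 (lt_eqF Qg) orbF => /eqP ur.
move: w0 r0; rewrite /w ur scale0r subr0 => /eqP.
by rewrite scaler_eq0 (negbTE ug) /= => ->.
Qed.

(* Along [dd], [Q] decreases linearly (by at least [2 h t]) while the
   [u]-component grows linearly; bounded perturbations are absorbed. *)
Lemma coneC_absorb dd (b h : R) : qform M dd = 0 -> 0 < dot u dd -> 0 < h ->
  exists t, forall w, dot w w <= b -> dot w (M *m dd) <= - h ->
    coneC M u (w + t *: dd).
Proof.
move=> Qdd udd h0; have [K [K0 HK]] := qform_abs_le M.
pose t := K * b / (2 * h) + (1 + b) / (2 * dot u dd).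
exists t => w wb wdd.
have b0 : 0 <= b by apply: le_trans wb; apply: dot_ge0.
have t0 : 0 <= t by rewrite addr_ge0 ?divr_ge0 ?mulr_ge0 //; lra.
have th : 2 * t * h = K * b + h * (1 + b) / dot u dd.
  by rewrite /t; field; rewrite !gt_eqF.
have tu : 2 * t * dot u dd = K * b * dot u dd / h + (1 + b).
  by rewrite /t; field; rewrite !gt_eqF.
have Qw : qform M w <= K * b.
  by have := HK w; rewrite ler_norml => /andP[_]; nra.
have uw : - (1 + b) <= 2 * dot u w.
  have := dot_abs_le u w; rewrite unit_u.
  by have := ler_norm (- dot u w); rewrite normrN; lra.
split.
  rewrite qformD // qformZ Qdd mulr0 addr0 -scalemxAr dotZr.
  have : 0 <= h * (1 + b) / dot u dd by rewrite divr_ge0 ?mulr_ge0 //; lra.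
  nra.
rewrite -/(dot u _) dotDr dotZr.
have : 0 <= K * b * dot u dd / h.
  by apply: divr_ge0; [do 2?apply: mulr_ge0 => //; exact: ltW | exact: ltW].
nra.
Qed.

End Lorentz.

Lemma inf_last_attained (R : realType) n (A : set 'cV[R]_n.+1) x0 :
  A x0 -> (forall x, A x -> xlast x0 <= xlast x) -> inf_last A = (xlast x0)%:E.
Proof.
move=> Ax0 minx0; apply/eqP; rewrite eq_le; apply/andP; split.
  by apply: ereal_inf_lbound; exists x0.
by apply: le_ereal_inf_tmp => _ [x Ax <-]; rewrite lee_fin minx0.
Qed.

Section LastCoordinate.
Variables (R : realType) (n : nat).
Implicit Types (x y : 'cV[R]_n.+1).

Lemma xlastD x y : xlast (x + y) = xlast x + xlast y.
Proof. by rewrite /xlast mxE. Qed.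

Lemma xlastN x : xlast (- x) = - xlast x.
Proof. by rewrite /xlast mxE. Qed.

Lemma xlastZ a x : xlast (a *: x) = a * xlast x.
Proof. by rewrite /xlast mxE. Qed.

Lemma dot_xlast x : dot x (delta_mx ord_max 0) = xlast x.
Proof. by rewrite dotC dot_col_delta. Qed.

End LastCoordinate.

Section ColFloor.
Variables (R : realType) (N : nat).

Definition col_floor (c : 'cV[R]_N) : 'cV[R]_N := \col_i (Num.floor (c i 0))%:~R.

Lemma col_floor_int c : intpt (col_floor c).
Proof. by move=> i; rewrite mxE intr_int. Qed.

Lemma col_floor_sub_sqnorm c : dot (col_floor c - c) (col_floor c - c) <= N%:R.
Proof.
have -> : N%:R = \sum_(i < N) (1 : R) by rewrite sumr_const card_ord.
rewrite dotE; apply: ler_sum => i _; rewrite !mxE.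
by have /andP[] := floor_itv (c i 0); rewrite intrD; nra.
Qed.

End ColFloor.

Lemma branch_false (R : realType) n (M : 'M[R]_n) beta gamma u :
  branch M beta gamma u false = branch M beta gamma (- u) true.
Proof.
apply/funext => x; rewrite /branch /coneC /= qformN.
by rewrite mulmxN linearN /= mulNmx.
Qed.

Section Branch.
Variables (R : realType) (n : nat) (M : 'M[R]_n.+1) (lam : R) (u : 'cV[R]_n.+1).
Variables (beta : 'cV[R]_n.+1) (gamma : R).
Hypotheses (symM : M^T = M) (unitM : M \in unitmx) (lam_lt0 : lam < 0).
Hypotheses (mup_lam : mup lam (char_poly M) = 1%N)
  (neg_eigen : forall mu, mu < 0 -> eigenvalue M mu -> mu = lam).
Hypotheses (Mu : M *m u = lam *: u) (unit_u : dot u u = 1).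
Hypothesis qstar_le0 : qstar M beta gamma <= 0.

Local Notation S := (branch M beta gamma u true).
Local Notation c0 := (center M beta).
Local Notation q := (qstar M beta gamma).
Local Notation e := (delta_mx ord_max 0 : 'cV[R]_n.+1).
Local Notation g := (invmx M *m e).

Lemma branchE x : S x <-> qform M (x - c0) <= q /\ coneC M u (x - c0).
Proof. by []. Qed.

Lemma bform_g x : dot x (M *m g) = xlast x.
Proof. by rewrite mulKVmx // dot_xlast. Qed.

Lemma branch_addr x z : S x -> coneC M u z -> S (x + z).
Proof.
move=> /branchE[Qy Cy] Cz; apply/branchE; rewrite addrAC.
split; last by apply: (coneC_add (lam := lam)).
by apply: le_trans _ Qy; apply: (qformD_coneC_le (lam := lam) (u := u)).
Qed.

Lemma branch_center_u : S (c0 + (1 + q / lam) *: u).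
Proof.
set t := 1 + q / lam; have := lam_lt0; have := qstar_le0 => q0 lam0.
have t1 : 1 <= t by rewrite lerDl mulr_le0 // invr_le0 ltW.
have tlam : t * lam = lam + q by rewrite mulrDl mul1r divfK ?lt_eqF.
apply/branchE; rewrite addrAC subrr add0r; split; last first.
  by apply: coneC_scale; [lra | apply: (coneC_eigen (lam := lam))].
rewrite qformZ qformE Mu dotZr unit_u mulr1 expr2 -mulrA tlam.
clearbody t; nra.
Qed.

Section FiniteInfimum.
Hypothesis inf_gt : (-oo < inf_last S)%E.

Local Notation d := (fine (inf_last S)).

Lemma inf_lastE : inf_last S = d%:E.
Proof.
have : (inf_last S <= (xlast (c0 + (1 + q / lam) *: u))%:E)%E.
  apply: ereal_inf_lbound; exists (c0 + (1 + q / lam) *: u) => //.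
  exact: branch_center_u.
by move: inf_gt; case: (inf_last S).
Qed.

Lemma inf_last_le x : S x -> d <= xlast x.
Proof.
by move=> Sx; rewrite -lee_fin -inf_lastE; apply: ereal_inf_lbound; exists x.
Qed.

Lemma inf_last_approx r : d < r -> exists2 x, S x & xlast x < r.
Proof.
rewrite -lte_fin -inf_lastE => /ereal_inf_lt[_ [x Sx <-]].
by rewrite lte_fin; exists x.
Qed.

Lemma coneC_last_ge0 z : coneC M u z -> 0 <= xlast z.
Proof.
move=> Cz; rewrite leNgt; apply/negP => z_lt0.
pose x0 := c0 + (1 + q / lam) *: u; have Sx0 : S x0 := branch_center_u.
pose t := (xlast x0 - d + 1) / (- xlast z).
have t0 : 0 <= t by rewrite divr_ge0 ?oppr_ge0 ?ltW //; have := inf_last_le Sx0; lra.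
have := inf_last_le (branch_addr Sx0 (coneC_scale t0 Cz)).
have tz : t * xlast z = - (xlast x0 - d + 1).
  by rewrite /t; field; rewrite lt_eqF.
by rewrite xlastD xlastZ tz; lra.
Qed.

Lemma lam_dot_u_g : lam * dot u g = xlast u.
Proof. by rewrite -(dot_eigen_mulmx symM Mu) bform_g. Qed.

(* If [Q g > 0], some [al *: u - g] is a descending direction of [C]. *)
Lemma qform_g_le0 : qform M g <= 0.
Proof.
rewrite leNgt; apply/negP => Qg_gt0; have lam0 := lam_lt0.
have eps0 := coneC_last_ge0 (coneC_eigen lam_lt0 Mu unit_u).
have ug : dot u g <= 0 by have := lam_dot_u_g; nra.
have Cz al : 0 <= al -> al ^+ 2 * lam - 2 * al * xlast u + qform M g <= 0 ->
    coneC M u (al *: u - g).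
  move=> al0 Qz; split; last by rewrite -/(dot u _) dotBr dotZr unit_u; lra.
  rewrite qformD // qformN qformZ qformE Mu dotZr unit_u mulr1.
  by rewrite mulmxN dotNr dotZl bform_g; lra.
have ez al : xlast (al *: u - g) = al * xlast u - qform M g.
  by rewrite xlastD xlastN xlastZ qformE bform_g.
move: eps0; rewrite le_eqVlt => /orP[/eqP eps_eq0|eps_gt0].
  pose al := 1 + qform M g / (- lam).
  have al1 : 1 <= al by rewrite lerDl divr_ge0 ?oppr_ge0 ?ltW.
  have al_lam : al * (- lam) = - lam + qform M g.
    by rewrite mulrDl mul1r divfK ?oppr_eq0 ?lt_eqF.
  have Qz : al ^+ 2 * lam - 2 * al * xlast u + qform M g <= 0.
    by rewrite -eps_eq0; nra.
  by have := coneC_last_ge0 (Cz al (le_trans ler01 al1) Qz); rewrite ez -eps_eq0; lra.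
pose al := qform M g / (2 * xlast u).
have al_eps : al * xlast u = qform M g / 2 by rewrite /al; field; rewrite gt_eqF.
have al0 : 0 < al by rewrite divr_gt0 ?mulr_gt0.
have Qz : al ^+ 2 * lam - 2 * al * xlast u + qform M g <= 0.
  by have := mulr_ge0 (ltW al0) (ltW al0); nra.
by have := coneC_last_ge0 (Cz al (ltW al0) Qz); rewrite ez; lra.
Qed.

Lemma xlast_u_gt0 : 0 < xlast u.
Proof.
have := coneC_last_ge0 (coneC_eigen lam_lt0 Mu unit_u).
rewrite le_eqVlt => /orP[/eqP eps_eq0|//].
have ug : dot u g = 0.
  by apply/eqP; move: lam_dot_u_g; rewrite -eps_eq0 => /eqP; rewrite mulf_eq0 lt_eqF.
have g0 : g != 0.
  apply/negP => /eqP g0; have := bform_g e.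
  by rewrite g0 mulmx0 dotC dot0l /xlast mxE !eqxx => /eqP; rewrite eq_sym oner_eq0.
have := qform_gt0_orth symM unitM mup_lam neg_eigen Mu unit_u ug g0.
by rewrite ltNge qform_g_le0.
Qed.

Lemma coneC_oppg : coneC M u (- g).
Proof.
split; first by rewrite qformN qform_g_le0.
rewrite -/(dot u _) dotNr oppr_ge0; have := lam_dot_u_g; have := xlast_u_gt0.
by have := lam_lt0; nra.
Qed.

Local Notation s := (Num.sqrt (q / qform M g)).

(* Writing [x - c0 = a g + r] with [B(g, r) = 0], the constraint [Q <= q]
   forces [a <= - s], and [a = - s] forces [r = 0]. *)
Lemma branch_last_ge x : qform M g < 0 -> S x ->
  xlast (s *: - g) <= xlast (x - c0) /\
  (xlast (x - c0) = xlast (s *: - g) -> x - c0 = s *: - g).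
Proof.
move=> Qg /branchE[Qy Cy]; set y := x - c0 in Qy Cy *.
have Qg_xlast : qform M g = xlast g by rewrite qformE bform_g.
pose a := xlast y / qform M g; pose r := y - a *: g.
have ya : xlast y = a * qform M g by rewrite /a divfK ?lt_eqF.
have gr : dot g (M *m r) = 0.
  by rewrite (dot_mulmx_sym symM) bform_g xlastD xlastN xlastZ ya -Qg_xlast subrr.
have Qr : 0 <= qform M r.
  have [->|r0] := eqVneq r 0; first by rewrite qformE dot0l.
  exact/ltW/(qform_gt0_orth_timelike symM unitM mup_lam neg_eigen Mu unit_u Qg gr r0).
have yE : y = a *: g + r by rewrite /r addrC subrK.
have Qy_eq : qform M y = a ^+ 2 * qform M g + qform M r.
  by rewrite yE qformD // qformZ dotZl gr !mulr0 addr0.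
have a_le0 : a <= 0.
  have := coneC_bform_le0 symM unitM lam_lt0 mup_lam neg_eigen Mu unit_u Cy coneC_oppg.
  by rewrite mulmxN dotNr bform_g oppr_le0 ya; nra.
have ss : s ^+ 2 * qform M g = q.
  by rewrite sqr_sqrtr ?divfK ?lt_eqF // mulr_le0 // invr_le0 ltW.
have s0 : 0 <= s := sqrtr_ge0 _.
have a_le : a <= - s.
  have : s ^+ 2 <= a ^+ 2.
    have : 0 <= qform M g * (s ^+ 2 - a ^+ 2) by move: Qy; rewrite Qy_eq; lra.
    by rewrite nmulr_rge0 // subr_le0.
  move=> sa; suff : s <= - a by lra.
  by rewrite -ler_sqr ?nnegrE ?oppr_ge0 // sqrrN.
rewrite xlastZ xlastN -Qg_xlast ya; split; first by nra.
move=> last_eq; have a_s : a = - s by apply: (mulIf (ltr0_neq0 Qg)); rewrite mulNr -mulrN.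
have r0 : r = 0.
  apply/eqP; apply: contraT => r0; move: Qy; rewrite Qy_eq a_s sqrrN ss -lerBrDl subrr.
  rewrite leNgt.
  by rewrite (qform_gt0_orth_timelike symM unitM mup_lam neg_eigen Mu unit_u Qg gr r0).
by rewrite yE r0 addr0 a_s scaleNr scalerN.
Qed.

Lemma branch_inf_unique : qform M g < 0 ->
  exists x, S x /\ (xlast x)%:E = inf_last S /\
    forall y, S y -> (xlast y)%:E = inf_last S -> y = x.
Proof.
move=> Qg; pose xs := c0 + s *: - g.
have xs_c0 : xs - c0 = s *: - g by rewrite /xs addrC addKr.
have Sxs : S xs.
  apply/branchE; rewrite xs_c0 qformZ qformN sqr_sqrtr ?divfK ?ltr0_neq0 //.
    by split => //; apply: coneC_scale (sqrtr_ge0 _) coneC_oppg.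
  by rewrite mulr_le0 // invr_le0 ltW.
have last_sub x : xlast x = xlast c0 + xlast (x - c0).
  by rewrite xlastD xlastN addrC subrK.
have min_xs x : S x -> xlast xs <= xlast x.
  move=> Sx; rewrite (last_sub x) (last_sub xs) xs_c0 lerD2l.
  by case: (branch_last_ge Qg Sx).
have infE := inf_last_attained Sxs min_xs.
exists xs; split => //; split => // y Sy; rewrite infE => -[yxs].
have [_ uniq] := branch_last_ge Qg Sy.
apply: (addIr (- c0)); rewrite xs_c0; apply: uniq.
by rewrite -xs_c0 xlastD yxs -xlastD.
Qed.

(* From a point of [S] just below height [k = floor d + 1], climb to height
   [k] along [u], then slide along the horizontal null direction [- g] far
   enough that rounding every coordinate down stays inside [S]. *)
Lemma branch_int_inf_le_of_null : qform M g = 0 ->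
  (inf_last (S `&` [set x | intpt x]) <= inf_last S + 1%:E)%E.
Proof.
move=> Qg0; pose k : R := (Num.floor d + 1)%:~R.
have [d_lt_k k_le] : d < k /\ k <= d + 1.
  by have /andP[] := floor_itv d; rewrite /k intrD; split; lra.
have [p Sp pk] := inf_last_approx d_lt_k.
pose h := k - xlast p; have h0 : 0 < h by rewrite subr_gt0.
pose z1 := (h / xlast u) *: u.
have z1_last : xlast z1 = h by rewrite xlastZ divfK ?gt_eqF ?xlast_u_gt0.
have g_last : xlast g = 0 by rewrite -(bform_g g) -qformE Qg0.
have ug : 0 < dot u (- g).
  rewrite dotNr oppr_gt0; have := lam_dot_u_g; have := xlast_u_gt0.
  by have := lam_lt0; nra.
have Qg0' : qform M (- g) = 0 by rewrite qformN.
have [t Ht] := coneC_absorb symM unit_u (2 * dot z1 z1 + 2 * n.+1%:R) Qg0' ug h0.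
pose c := p + z1 + t *: - g.
have c_last : xlast c = k by rewrite !xlastD z1_last xlastZ xlastN g_last /h; lra.
pose v := col_floor c - c.
have x_last : xlast (col_floor c) = k by rewrite /xlast mxE -/(xlast c) c_last intrKfloor.
have v_last : xlast v = 0 by rewrite xlastD xlastN x_last c_last subrr.
have xE : col_floor c = p + ((z1 + v) + t *: - g).
  by apply/matrixP => i j; rewrite !mxE; ring.
have v_norm : dot v v <= n.+1%:R := col_floor_sub_sqnorm c.
clearbody v z1.
have Sx : S (col_floor c).
  rewrite xE; have := branch_addr Sp; apply; apply: Ht.
    have := dot_abs_le z1 v; rewrite !dotDl !dotDr (dotC v z1).
    by have := ler_norm (dot z1 v); lra.
  by rewrite mulmxN dotNr bform_g xlastD z1_last v_last addr0.
have : (inf_last (S `&` [set x | intpt x]) <= (xlast (col_floor c))%:E)%E.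
  apply: ereal_inf_lbound; exists (col_floor c) => //.
  by split => //; exact: col_floor_int.
by move/le_trans; apply; rewrite inf_lastE x_last -EFinD lee_fin.
Qed.

Lemma branch_int_inf_le :
  ~ (exists x, S x /\ (xlast x)%:E = inf_last S /\
       forall y, S y -> (xlast y)%:E = inf_last S -> y = x) ->
  (inf_last (S `&` [set x | intpt x]) <= inf_last S + 1%:E)%E.
Proof.
move=> no_unique; have := qform_g_le0; rewrite le_eqVlt => /orP[/eqP Qg0|Qg_lt0].
  exact: branch_int_inf_le_of_null.
by case: no_unique; apply: branch_inf_unique.
Qed.

End FiniteInfimum.

End Branch.

Theorem mainTheorem17 (R : realType) (n : nat) (hn : (1 <= n)%N)
    (M : 'M[R]_n.+1) (beta : 'cV[R]_n.+1) (gamma : R)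
    (lam : R) (u : 'cV[R]_n.+1) (s : bool) :
  M^T = M ->
  M \in unitmx ->
  lam < 0 ->
  mup lam (char_poly M) = 1%N ->
  (forall mu : R, mu < 0 -> eigenvalue M mu -> mu = lam) ->
  M *m u = lam *: u ->
  (u^T *m u) 0 0 = 1 ->
  qstar M beta gamma <= 0 ->
  let S := branch M beta gamma u s in
  let dinf := inf_last S in
  (-oo < dinf)%E ->
  ~ (exists x, S x /\ (xlast x)%:E = dinf /\
       forall y, S y -> (xlast y)%:E = dinf -> y = x) ->
  (inf_last (S `&` [set x | intpt x]) <= dinf + 1%:E)%E.
Proof.
move=> symM unitM lam_lt0 mup_lam neg_eigen Mu unit_u qstar_le0 S dinf.
case: s in S dinf *; first by apply: (branch_int_inf_le (lam := lam)).
rewrite {}/dinf {}/S branch_false; apply: (branch_int_inf_le (lam := lam)) => //.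
  by rewrite mulmxN Mu scalerN.
by rewrite -/(dot u u) in unit_u; rewrite dotNl dotNr opprK.
Qed.
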